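(* Let $I=\{i_1<i_2<\dots<i_\ell\}$ be a nonempty finite set of positive integers with $m=i_\ell$. For $1\le k\le \ell$ define $$I_k=\{i_1,\dots,i_{k-1},\,i_k-1,\dots,i_\ell-1\}\setminus\{0\},\qquad \hat I_k=\{i_1,\dots,i_{k-1},\,i_{k+1}-1,\dots,i_\ell-1\},$$ let $I'=\{i_k\in I\mid i_k-1\notin I\}$ and $I''=I'\setminus\{1\}$. Then for all integers $n>m$, $$d(I;n+1)=d(I;n)+\sum_{k:\, i_k\in I''} d(I_k;n)+\sum_{k:\, i_k\in I'} d(\hat I_k;n).$$
   Context: For a permutation $\pi=\pi_1\cdots\pi_n$ of $[n]$, $\mathrm{Des}\,\pi=\{i\mid \pi_i>\pi_{i+1}\}$. For a finite set $J$ of positive integers and $n>\max(J\cup\{0\})$, $d(J;n)=\#\{\pi\in\mathfrak S_n\mid \mathrm{Des}\,\pi=J\}$. *)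

From mathcomp Require Import all_boot all_order all_fingroup.
Set Implicit Arguments. Unset Strict Implicit. Unset Printing Implicit Defensive.

(* One-line notation of s : 'S_n as a sequence (values 0..n-1, i.e. pi_j - 1;
   relative order identical to the paper's pi_1 ... pi_n). *)
Definition oneline n (s : 'S_n) : seq nat := [seq val (s j) | j <- enum 'I_n].

(* i (1-based position, 1 <= i <= n-1) is a descent of s: pi_i > pi_{i+1}. *)
Definition is_des n (s : 'S_n) (i : nat) : bool :=
  (0 < i < n) && (nth 0 (oneline s) i < nth 0 (oneline s) i.-1).

Definition d (J : seq nat) (n : nat) : nat :=
  #|[set s : 'S_n | all (fun j => j < n) J &&
                    [forall i : 'I_n, (val i \in J) == is_des s i]]|.

(* With k 0-based (k = paper's k - 1), i_{k+1} = nth 0 I k. *)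
Definition Ik (I : seq nat) (k : nat) : seq nat :=
  [seq x <- take k I ++ map predn (drop k I) | x != 0].
Definition Ihat (I : seq nat) (k : nat) : seq nat :=
  take k I ++ map predn (drop k.+1 I).
Definition Iprime (I : seq nat) : seq nat := [seq x <- I | x.-1 \notin I].

From mathcomp Require Import all_boot all_order all_fingroup.
From mathcomp Require Import zify.
Set Implicit Arguments. Unset Strict Implicit. Unset Printing Implicit Defensive.

(* Read a permutation of [n+1] as a permutation of [n] with the maximal value
   inserted at some position q.  Inserting it at the end changes no descent.
   Inserting it at 0-based position q < n forces an ascent at q and a descent
   at q+1, keeps the descents before q, shifts those after q by one, and erases
   whatever happened at q.  So the result has descent set I exactly when
   q+1 = i_k with i_k - 1 notin I and the shorter permutation has descent set
   Ihat_k (ascent at q) or I_k (descent at q, impossible when q = 0). *)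

Lemma forall_ord_iota n (p : pred nat) : [forall i : 'I_n, p (val i)] = all p (iota 0 n).
Proof.
rewrite -val_enum_ord all_map.
by apply/forallP/allP => [p_ord i _ | p_ord i]; [apply: p_ord | apply: p_ord; rewrite mem_enum].
Qed.

Lemma count_split_pred (T : Type) (a b : pred T) s :
  count a s = count (fun x => a x && b x) s + count (fun x => a x && ~~ b x) s.
Proof. by elim: s => //= x s ->; case: (a x); case: (b x) => /=; lia. Qed.

Lemma big_ord_succ_index (R : Type) (idx : R) (op : Monoid.com_law idx)
    (I A : seq nat) n (F : nat -> R) :
  uniq I -> {subset A <= I} -> {in I, forall x, 0 < x <= n} ->
  \big[op/idx]_(q < n | q.+1 \in A) F (index q.+1 I) =
  \big[op/idx]_(k < size I | nth 0 I k \in A) F k.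
Proof.
move=> uniq_I sub_AI I_range.
rewrite -(big_mkord (fun q => q.+1 \in A) (fun q => F (index q.+1 I))).
have -> : \big[op/idx]_(0 <= q < n | q.+1 \in A) F (index q.+1 I) =
          \big[op/idx]_(1 <= x < n.+1 | x \in A) F (index x I) by rewrite big_add1.
rewrite -(big_mkord (fun k => nth 0 I k \in A) F).
have -> : \big[op/idx]_(0 <= k < size I | nth 0 I k \in A) F k =
          \big[op/idx]_(x <- I | x \in A) F (index x I).
  rewrite [RHS](big_nth 0) big_nat_cond [RHS]big_nat_cond.
  by apply: eq_bigr => k /andP [/andP [_ lt_k] _]; rewrite index_uniq.
rewrite -!(big_filter _ (fun x => x \in A)); apply: perm_big.
apply: uniq_perm; rewrite ?filter_uniq ?iota_uniq // => x; rewrite !mem_filter.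
case xA: (x \in A) => //=; have xI := sub_AI x xA.
by rewrite xI mem_index_iota ltnS I_range.
Qed.

Lemma sorted_ltn_le_last (I : seq nat) x : sorted ltn I -> x \in I -> x <= last 0 I.
Proof.
move=> sorted_I xI; have lt_x : index x I < size I by rewrite index_mem.
rewrite -(nth_index 0 xI) -nth_last.
apply: (sorted_leq_nth leq_trans leqnn 0 (sub_sorted (fun a b => @ltnW a b) sorted_I)).
- by rewrite inE.
- by rewrite inE prednK ?leqnn // (leq_ltn_trans (leq0n _) lt_x).
by rewrite -ltnS prednK // (leq_ltn_trans (leq0n _) lt_x).
Qed.

Lemma mem_map_predn (D : seq nat) i : 0 \notin D -> (i \in map predn D) = (i.+1 \in D).
Proof.
move=> D0; apply/mapP/idP => [[[|y] yD ->] // | iD]; last by exists i.+1.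
by rewrite yD in D0.
Qed.

Section SortedIndex.
Variables (T : eqType) (leT : rel T).
Hypotheses (leT_tr : transitive leT) (leT_irr : irreflexive leT).
Variable I : seq T.
Hypothesis sorted_I : sorted leT I.

Lemma index_lt_sorted x y : x \in I -> y \in I -> (index x I < index y I) = leT x y.
Proof.
move=> xI yI; case: (ltngtP (index x I) (index y I)) => [lt_xy | lt_yx | eq_xy].
- by rewrite (sorted_ltn_index leT_tr sorted_I).
- apply/esym/negP => le_xy.
  by have := leT_tr le_xy (sorted_ltn_index leT_tr sorted_I _ _ yI xI lt_yx); rewrite leT_irr.
have -> : x = y by rewrite -(nth_index x xI) eq_xy nth_index.
by rewrite leT_irr.
Qed.

Lemma mem_take_index_sorted x y : x \in I ->
  (y \in take (index x I) I) = (y \in I) && leT y x.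
Proof.
move=> xI; case yI: (y \in I); first by rewrite in_take // index_lt_sorted.
by apply/negbTE; apply: contraFN yI; apply: mem_take.
Qed.

Lemma mem_drop_index_sorted x y : x \in I ->
  (y \in drop (index x I).+1 I) = (y \in I) && leT x y.
Proof.
move=> xI; case yI: (y \in I); last by apply/negbTE; apply: contraFN yI; apply: mem_drop.
have: uniq I := sorted_uniq leT_tr leT_irr sorted_I.
rewrite -[in uniq _](cat_take_drop (index x I).+1 I) cat_uniq => /and3P [_ /hasPn disj _].
have [y_drop | y_take] := boolP (y \in drop (index x I).+1 I).
  by apply/esym; move: (disj _ y_drop); rewrite in_take // ltnS leqNgt index_lt_sorted // negbK.
have y_take' : y \in take (index x I).+1 I.
  by move: yI; rewrite -{1}(cat_take_drop (index x I).+1 I) mem_cat (negbTE y_take) orbF.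
by move: y_take'; rewrite in_take // ltnS leqNgt index_lt_sorted // => /negbTE.
Qed.

End SortedIndex.

Definition ins_at {T : Type} (q : nat) (x : T) (s : seq T) := take q s ++ x :: drop q s.
Definition del_at {T : Type} (q : nat) (s : seq T) := take q s ++ drop q.+1 s.

Lemma nth_ins_at {T : Type} (x0 : T) q x s i : q <= size s ->
  nth x0 (ins_at q x s) i = if i < q then nth x0 s i else if i == q then x else nth x0 s i.-1.
Proof.
move=> le_qs; rewrite /ins_at nth_cat size_takel //.
case: ltnP => [lt_iq | le_qi]; first by rewrite nth_take.
case: (eqVneq i q) => [->|ne_iq]; first by rewrite subnn.
have -> : i - q = (i.-1 - q).+1 by lia.
by rewrite /= nth_drop; congr nth; lia.
Qed.

Section Insertion.
Variable T : eqType.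
Implicit Types (x : T) (s : seq T).

Lemma perm_eq_ins_at q x s : perm_eq (ins_at q x s) (x :: s).
Proof. by rewrite /ins_at -cat1s perm_catCA /= cat_take_drop. Qed.

Lemma del_ins_at q x s : q <= size s -> del_at q (ins_at q x s) = s.
Proof.
move=> le_qs; rewrite /del_at /ins_at take_cat drop_cat size_takel // ltnn subnn take0 cats0.
by rewrite ltnNge leqnSn subSnn /= drop0 cat_take_drop.
Qed.

Lemma ins_del_at x s : x \in s -> ins_at (index x s) x (del_at (index x s) s) = s.
Proof.
move=> xs; have lt_is : index x s < size s by rewrite index_mem.
rewrite /del_at /ins_at take_cat drop_cat size_takel ?ltnn ?subnn ?take0 ?cats0 ?drop0; last exact: ltnW.
by rewrite -[RHS](cat_take_drop (index x s)) [in RHS](drop_nth x) // nth_index.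
Qed.

Lemma index_ins_at q x s : q <= size s -> x \notin s -> index x (ins_at q x s) = q.
Proof.
move=> le_qs xNs; rewrite /ins_at index_cat size_takel // (negbTE (contra (@mem_take _ _ _ _) xNs)).
by rewrite /= eqxx addn0.
Qed.

End Insertion.

Definition is_des_seq (N : nat) (s : seq nat) (i : nat) : bool :=
  (0 < i < N) && (nth 0 s i < nth 0 s i.-1).

Definition is_des_set (J : seq nat) (N : nat) (s : seq nat) : bool :=
  all (fun j => j < N) J && all (fun i => (i \in J) == is_des_seq N s i) (iota 0 N).

Definition perms (n : nat) : seq (seq nat) := permutations (iota 0 n).

Lemma is_des_setP J N s :
  reflect (forall i, (i \in J) = is_des_seq N s i) (is_des_set J N s).
Proof.
apply: (iffP andP) => [[/allP J_lt /allP agree] i | agree].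
  case: (ltnP i N) => [lt_iN | le_Ni]; first by apply/eqP/agree; rewrite mem_iota.
  rewrite /is_des_seq (leq_gtF le_Ni) andbF.
  by apply: contraTF le_Ni => /J_lt; rewrite -ltnNge.
split; apply/allP => i; last by rewrite agree.
by rewrite agree => /andP [/andP []].
Qed.

Lemma mem_perms n s : (s \in perms n) = perm_eq s (iota 0 n).
Proof. exact: mem_permutations. Qed.

Lemma perms_size_lt n s : s \in perms n -> size s = n /\ all (fun v => v < n) s.
Proof.
rewrite mem_perms => pm; split; first by rewrite (perm_size pm) size_iota.
by apply/allP => v; rewrite (perm_mem pm v) mem_iota.
Qed.

Lemma oneline_inj n : injective (@oneline n).
Proof.
move=> s t eq_st; apply/permP => j; apply: val_inj.
have := congr1 (fun x => nth 0 x j) eq_st; rewrite /oneline.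
rewrite (nth_map j) ?size_enum_ord // (nth_map j) ?size_enum_ord //.
by rewrite nth_ord_enum.
Qed.

Lemma perm_eq_oneline n (s : 'S_n) : perm_eq (oneline s) (iota 0 n).
Proof.
rewrite /oneline -val_enum_ord (map_comp val s); apply: perm_map.
apply: uniq_perm; [by rewrite map_inj_uniq ?enum_uniq //; apply: perm_inj | exact: enum_uniq|].
move=> x; rewrite mem_enum; apply/mapP; exists (s^-1 x)%g; first by rewrite mem_enum.
by rewrite permKV.
Qed.

Lemma perm_eq_map_oneline n : perm_eq (map (@oneline n) (enum 'S_n)) (perms n).
Proof.
have uniq_oneline : uniq (map (@oneline n) (enum 'S_n)).
  by rewrite map_inj_uniq ?enum_uniq //; apply: oneline_inj.
apply: uniq_perm => //; first exact: permutations_uniq.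
apply: (uniq_min_size uniq_oneline _ _).2.
  by move=> x /mapP [s _ ->]; rewrite mem_perms perm_eq_oneline.
by rewrite size_map -cardE card_Sn size_permutations ?iota_uniq // size_iota.
Qed.

Lemma d_count J n : d J n = count (is_des_set J n) (perms n).
Proof.
rewrite /d -(seq.permP (perm_eq_map_oneline n)) count_map cardsE cardE /enum_mem.
rewrite size_filter count_filter; apply: eq_count => s.
by rewrite /= /is_des_set [s \in _]unfold_in /= andbT -forall_ord_iota.
Qed.

Lemma perm_eq_cons_iota n s : perm_eq (n :: s) (iota 0 n.+1) = perm_eq s (iota 0 n).
Proof.
have -> : iota 0 n.+1 = iota 0 n ++ [:: n] by rewrite -addn1 iotaD.
by rewrite perm_sym perm_catC perm_cons perm_sym.
Qed.

Lemma perms_ins_max n :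
  perm_eq (perms n.+1) [seq ins_at q n s | q <- iota 0 n.+1, s <- perms n].
Proof.
have size_notin s : s \in perms n -> size s = n /\ n \notin s.
  by move=> /perms_size_lt [-> /allP s_lt]; split => //; apply/negP => /s_lt; rewrite ltnn.
apply: uniq_perm; first exact: permutations_uniq.
  apply: allpairs_uniq; [exact: iota_uniq | exact: permutations_uniq |].
  move=> _ _ /allpairsP [[q1 s1] [q1_in s1_in ->]] /allpairsP [[q2 s2] [q2_in s2_in ->]] /=.
  move: q1_in q2_in s1_in s2_in; rewrite !mem_iota /= !ltnS.
  move=> le1 le2 /size_notin [size1 n1] /size_notin [size2 n2] eq_ins.
  rewrite -size1 in le1; rewrite -size2 in le2.
  have eq_q : q1 = q2 by rewrite -(index_ins_at le1 n1) eq_ins index_ins_at.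
  by rewrite -(del_ins_at n le1) eq_ins eq_q del_ins_at.
move=> x; apply/idP/idP => [|/allpairsP [[q s] [/= _ s_in ->]]]; last first.
  by rewrite mem_perms (permPl (perm_eq_ins_at _ _ _)) perm_eq_cons_iota -mem_perms.
rewrite mem_perms => x_perm; apply/allpairsP.
have n_in : n \in x by rewrite (perm_mem x_perm) mem_iota add0n ltnSn.
exists (index n x, del_at (index n x) x); split; last by rewrite ins_del_at.
  by rewrite mem_iota add0n /= -[n.+1](size_iota 0) -(perm_size x_perm) index_mem.
by rewrite mem_perms /= -perm_eq_cons_iota -(permPl (perm_eq_ins_at (index n x) _ _)) ins_del_at.
Qed.

Lemma count_perms_ins_max (P : pred (seq nat)) n :
  count P (perms n.+1) = \sum_(q < n.+1) count (P \o ins_at q n) (perms n).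
Proof.
rewrite (seq.permP (perms_ins_max n)) count_flatten sumnE.
rewrite -[iota 0 n.+1]/(index_iota 0 n.+1) !big_map big_mkord.
by apply: eq_bigr => q _; rewrite count_map.
Qed.

Definition des_after_ins (q : nat) (D : pred nat) : pred nat :=
  fun i => if i < q then D i else if i == q then false else if i == q.+1 then true else D i.-1.

Definition excise (q : nat) (b : bool) (P : pred nat) : pred nat :=
  fun i => if i < q then P i else if i == q then b else P i.+1.

Lemma eq_des_after_ins q (P D : pred nat) :
  P =1 des_after_ins q D <-> [/\ P q.+1, ~~ P q & excise q (D q) P =1 D].
Proof.
rewrite /des_after_ins /excise; split => [eqPD | [Pq1 NPq eqD] i].
  split=> [||i]; first by rewrite eqPD ltnNge leqnSn (gtn_eqF (ltnSn q)) eqxx.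
    by rewrite eqPD ltnn eqxx.
  case: (ltngtP i q) => [lt_iq | lt_qi | ->] //; rewrite eqPD ?lt_iq //.
  have [-> ->] : (i.+1 < q = false) /\ (i.+1 == q = false) by split; apply/negbTE; lia.
  by rewrite eqSS gtn_eqF.
case: (ltngtP i q) => [lt_iq | lt_qi | ->]; rewrite ?(negbTE NPq) //; first by rewrite -eqD lt_iq.
case: eqVneq => [-> // | ne_iq1]; have lt_q_pi : q < i.-1 by lia.
by rewrite -eqD ltnNge (ltnW lt_q_pi) gtn_eqF // prednK //; lia.
Qed.

Section InsertMaximum.
Variables (n : nat) (s : seq nat).
Hypotheses (size_s : size s = n) (s_lt : all (fun v => v < n) s).

Let nth_s_lt j : j < n -> nth 0 s j < n.
Proof. by move=> lt_jn; apply: (allP s_lt); rewrite mem_nth ?size_s. Qed.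

Lemma is_des_seq_ins_last : is_des_seq n.+1 (ins_at n n s) =1 is_des_seq n s.
Proof.
move=> i; rewrite /is_des_seq !nth_ins_at ?size_s //; have := @nth_s_lt i.-1.
by case: (ltngtP i n) => [lt_in|lt_ni|->] lt_nth; repeat case: ifP; lia.
Qed.

Lemma is_des_seq_ins q : q < n -> is_des_seq n.+1 (ins_at q n s) =1 des_after_ins q (is_des_seq n s).
Proof.
move=> lt_qn i; rewrite /is_des_seq /des_after_ins !nth_ins_at ?size_s ?(ltnW lt_qn) //.
have := @nth_s_lt i.-1.
by case: (ltngtP i q) => [lt_iq|lt_qi|->] lt_nth; repeat case: ifP; lia.
Qed.

End InsertMaximum.

Section DescentSetsAfterInsertion.
Variables (n : nat) (s : seq nat).
Hypotheses (size_s : size s = n) (s_lt : all (fun v => v < n) s).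

Lemma is_des_set_ins_last I : is_des_set I n.+1 (ins_at n n s) = is_des_set I n s.
Proof.
by apply/is_des_setP/is_des_setP => agree i; rewrite agree is_des_seq_ins_last.
Qed.

Variables (I : seq nat) (q : nat).
Hypothesis lt_qn : q < n.

Lemma is_des_set_insP :
  reflect [/\ q.+1 \in I, q \notin I & excise q (is_des_seq n s q) (fun i => i \in I) =1 is_des_seq n s]
          (is_des_set I n.+1 (ins_at q n s)).
Proof.
apply: (iffP (is_des_setP _ _ _)) => [agree | /eq_des_after_ins agree i].
  by apply/eq_des_after_ins => i; rewrite -is_des_seq_ins //; apply: agree.
by rewrite is_des_seq_ins //; apply: agree.
Qed.

Lemma is_des_set_ins (J : seq nat) b : q.+1 \in I -> q \notin I ->
  (forall i, (i \in J) = excise q b (fun i => i \in I) i) ->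
  is_des_set I n.+1 (ins_at q n s) && (is_des_seq n s q == b) = is_des_set J n s.
Proof.
move=> q1_in q_notin memJ.
apply/andP/is_des_setP => [[/is_des_set_insP [_ _ agree] /eqP des_q] i | agreeJ].
  by rewrite memJ -des_q agree.
have des_q : is_des_seq n s q = b by rewrite -agreeJ memJ /excise ltnn eqxx.
split; last by rewrite des_q.
by apply/is_des_set_insP; split => // i; rewrite des_q -agreeJ memJ.
Qed.

End DescentSetsAfterInsertion.

Section ExcisionOfAnAscent.
Variables (I : seq nat) (q : nat).
Hypotheses (sorted_I : sorted ltn I) (I0 : 0 \notin I) (q1_in : q.+1 \in I) (q_notin : q \notin I).

Let drop_index : drop (index q.+1 I) I = q.+1 :: drop (index q.+1 I).+1 I.
Proof. by rewrite (drop_nth 0) ?index_mem // nth_index. Qed.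

Let drop_notin0 : 0 \notin drop (index q.+1 I).+1 I.
Proof. by apply: contra I0; apply: mem_drop. Qed.

Lemma mem_Ihat i : (i \in Ihat I (index q.+1 I)) = excise q false (fun i => i \in I) i.
Proof.
rewrite /Ihat /excise mem_cat mem_map_predn // (mem_take_index_sorted ltn_trans ltnn) //.
rewrite (mem_drop_index_sorted ltn_trans ltnn) // !ltnS.
by case: (ltngtP i q) => [lt_iq | lt_qi | ->]; rewrite ?andbT ?andbF ?orbF ?(negbTE q_notin).
Qed.

Lemma mem_Ik : q != 0 -> forall i, (i \in Ik I (index q.+1 I)) = excise q true (fun i => i \in I) i.
Proof.
move=> q_pos i; rewrite /Ik /excise mem_filter mem_cat drop_index /= inE mem_map_predn //.
rewrite (mem_take_index_sorted ltn_trans ltnn) // (mem_drop_index_sorted ltn_trans ltnn) // !ltnS.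
case: (ltngtP i q) => [lt_iq | lt_qi | ->]; rewrite ?andbT ?andbF ?orbF ?orbT ?q_pos //=.
  by case: eqVneq => [->|] //=; rewrite (negbTE I0).
by rewrite -lt0n (leq_ltn_trans (leq0n q) lt_qi).
Qed.

End ExcisionOfAnAscent.

Lemma count_ins_at I n q : sorted ltn I -> 0 \notin I -> q < n ->
  count (is_des_set I n.+1 \o ins_at q n) (perms n) =
  if q.+1 \in Iprime I then
    (if q != 0 then d (Ik I (index q.+1 I)) n else 0) + d (Ihat I (index q.+1 I)) n
  else 0.
Proof.
move=> sorted_I I0 lt_qn; rewrite mem_filter /=.
case: ifP => [/andP [q_notin q1_in] | not_ascent]; last first.
  rewrite (eq_in_count (a2 := pred0)) ?count_pred0 // => s /perms_size_lt [size_s s_lt] /=.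
  by apply: contraFF not_ascent => /(is_des_set_insP size_s s_lt _ lt_qn) [-> -> _].
rewrite (count_split_pred _ (fun s => is_des_seq n s q)) !d_count; congr (_ + _).
  case: eqVneq => [-> | q_pos] /=.
    by rewrite (eq_count (a2 := pred0)) ?count_pred0 // => s; rewrite /is_des_seq /= andbF.
  apply: eq_in_count => s /perms_size_lt [size_s s_lt] /=.
  by rewrite -(is_des_set_ins size_s s_lt lt_qn q1_in q_notin (mem_Ik sorted_I I0 q1_in q_pos)) eqb_id.
apply: eq_in_count => s /perms_size_lt [size_s s_lt] /=.
by rewrite -(is_des_set_ins size_s s_lt lt_qn q1_in q_notin (mem_Ihat sorted_I I0 q1_in q_notin)) eqbF_neg.
Qed.

Theorem theorem2p4 (I : seq nat) (n : nat) :
  I != [::] -> sorted ltn I -> 0 \notin I -> last 0 I < n ->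
  d I n.+1 =
    d I n
    + \sum_(k < size I | (nth 0 I k \in Iprime I) && (nth 0 I k != 1)) d (Ik I k) n
    + \sum_(k < size I | nth 0 I k \in Iprime I) d (Ihat I k) n.
Proof.
move=> _ sorted_I I0 last_lt.
have uniq_I : uniq I := sorted_uniq ltn_trans ltnn sorted_I.
have I_range : {in I, forall x, 0 < x <= n}.
  move=> x xI; rewrite lt0n (ltnW (leq_ltn_trans (sorted_ltn_le_last sorted_I xI) last_lt)) andbT.
  by apply: contraNneq I0 => <-.
have ins_last : count (is_des_set I n.+1 \o ins_at n n) (perms n) = d I n.
  by rewrite d_count; apply: eq_in_count => s /perms_size_lt [size_s s_lt]; apply: is_des_set_ins_last.
rewrite d_count count_perms_ins_max big_ord_recr /= ins_last addnC -addnA; congr (_ + _).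
pose G k := (if nth 0 I k != 1 then d (Ik I k) n else 0) + d (Ihat I k) n.
rewrite (eq_bigr (fun q : 'I_n => if q.+1 \in Iprime I then G (index q.+1 I) else 0)); last first.
  move=> q _; rewrite count_ins_at //; case: ifP => // q_ascent.
  have q1_in : q.+1 \in I by move: q_ascent; rewrite mem_filter => /andP [].
  by rewrite /G nth_index.
rewrite -big_mkcond /= big_ord_succ_index //; last by move=> x; rewrite mem_filter => /andP [].
by rewrite big_split -big_mkcondr.
Qed.
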